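(* Let $\mathcal V$ be a vector space partition of $\mathbb F_2^{10}$ such that $\dim(V)$ is even for all $V\in\mathcal V$. Then $\mathcal V$ has one of the types $[10^1]$; $[2^{256},8^1]$; $[2^{320-5i},4^i,6^1]$ for some $0\le i\le64$; or $[2^{341-5i},4^i]$ for some $0\le i\le66$. Vector space partitions of $\mathbb F_2^{10}$ of each of these types exist, except possibly of type $[2^{11},4^{66}]$.
   Context: A vector space partition of $\mathbb F_2^n$ is a set of nonzero subspaces such that every nonzero vector lies in exactly one of them. It has type $[d_1^{n_1},\dots,d_k^{n_k}]$ (with $d_1<\dots<d_k$) if it contains exactly $n_i$ subspaces of dimension $d_i$ and no others. *)

From HB Require Import structures.
From mathcomp Require Import all_boot all_order all_algebra.
Set Implicit Arguments. Unset Strict Implicit. Unset Printing Implicit Defensive.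
Import GRing.Theory.
Local Open Scope ring_scope.

(* Ambient space F_2^n, vectors are row vectors 'rV['F_2]_n.
   Subspaces are represented by their sets of vectors. *)
Notation vec n := 'rV['F_2]_n.

Definition span n (A : {set vec n}) : 'M['F_2]_n :=
  (\sum_(v in A) <<v>>)%MS.

Definition is_subspace n (A : {set vec n}) : Prop :=
  A = [set v : vec n | (v <= span A)%MS].

Definition sdim n (A : {set vec n}) : nat := \rank (span A).

Definition vs_partition n (P : {set {set vec n}}) : Prop :=
  (forall A, A \in P -> is_subspace A /\ (0 < sdim A)%N) /\
  (forall v : vec n, v != 0 -> exists! A, A \in P /\ v \in A).

Definition ndim n (P : {set {set vec n}}) (d : nat) : nat :=
  #|[set A in P | sdim A == d]|.

(* The type [d_1^{n_1}, ..., d_k^{n_k}], given as a list of pairs (d_i, n_i)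
   with distinct d_i: exactly n_i members of dimension d_i and no others. *)
Definition has_type n (P : {set {set vec n}}) (t : seq (nat * nat)) : Prop :=
  forall d, ndim P d = (\sum_(p <- t | p.1 == d) p.2)%N.

From Pilot Require Import Defs.
From mathcomp Require Import all_boot all_order all_algebra.
From mathcomp Require Import zify.
Set Implicit Arguments. Unset Strict Implicit. Unset Printing Implicit Defensive.
Import GRing.Theory.
Local Open Scope ring_scope.

(** Counting the nonzero vectors gives
    [3 n_2 + 15 n_4 + 63 n_6 + 255 n_8 + 1023 n_10 = 1023], and two members
    whose dimensions add up to more than 10 would meet nontrivially.  This
    leaves the listed types together with [2^1, 4^68] and [2^6, 4^67].  These two
    are excluded by counting, for each [w], the planes meeting the affine
    hyperplane [{v | v.w = 1}].  Each of them meets it in 2 vectors, while the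
    hyperplane and its intersections with the 4-dimensional members have a
    multiple of 8 elements, so their number is divisible by 4; but on average
    over [w] it is 3/4 of the number of planes.

    For the constructions, [F_2^10] is made into [F_4^5] by a matrix [J] with
    [J^2 = J + 1].  Pairwise disjoint [J]-invariant subspaces extend to a
    partition by adding the [F_4]-lines [{0, v, vJ, v + vJ}] of the vectors
    they leave uncovered.  The invariant subspaces used are a coordinate
    subspace and up to 64 [F_4]-planes forming a partial spread: graphs of
    [F_4]-linear maps [F_4^2 -> F_4^3] whose pairwise differences are
    injective, which is checked by computation. *)

Lemma F2_addxx (x : 'F_2) : x + x = 0.
Proof. exact: (@addrr_pchar2 _ (@pchar_Fp 2 isT)). Qed.

Lemma F2_cases (x : 'F_2) : x = 0 \/ x = 1.
Proof. by case: x => [[|[|m]] Hm] //; [left|right]; apply/val_inj. Qed.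

Lemma F2_neq0 (x : 'F_2) : (x != 0) = (x == 1).
Proof. by case: (F2_cases x) => ->. Qed.

Lemma F2_natE k : (k%:R : 'F_2) = (odd k)%:R.
Proof. by rewrite -(Fp_nat_mod (isT : prime 2)) modn2. Qed.

Lemma mxF2_addxx m n (A : 'M['F_2]_(m, n)) : A + A = 0.
Proof. by apply/matrixP => i j; rewrite !mxE F2_addxx. Qed.

Lemma mxF2_addKx m n (A B : 'M['F_2]_(m, n)) : A + (A + B) = B.
Proof. by rewrite addrA mxF2_addxx add0r. Qed.

(** * Subspaces and vector space partitions of F_2^n *)

Lemma card_rowspace (F : finFieldType) m n (M : 'M[F]_(m, n)) :
  #|[set v : 'rV[F]_n | (v <= M)%MS]| = (#|F| ^ \rank M)%N.
Proof.
have -> : [set v : 'rV_n | (v <= M)%MS] = [set x *m row_base M | x : 'rV_(\rank M)].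
  apply/setP => v; rewrite inE -(eq_row_base M); apply/idP/imsetP.
    by case/submxP=> x ->; exists x.
  by case=> x _ ->; rewrite submxMl.
rewrite card_imset; last exact/row_free_inj/row_base_free.
by rewrite card_mx mul1n.
Qed.

Section Subspaces.
Variable n : nat.
Implicit Types (A : {set vec n}) (v x y : vec n).

Lemma subspace_memE A v : is_subspace A -> (v \in A) = (v <= Defs.span A)%MS.
Proof. by move=> sA; rewrite {1}sA inE. Qed.

Lemma subspace0 A : is_subspace A -> 0 \in A.
Proof. by move=> sA; rewrite (subspace_memE _ sA) sub0mx. Qed.

Lemma subspaceD A x y : is_subspace A -> x \in A -> y \in A -> x + y \in A.
Proof. by move=> sA; rewrite !(subspace_memE _ sA); apply: addmx_sub. Qed.

Lemma subspaceZ A a x : is_subspace A -> x \in A -> a *: x \in A.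
Proof. by move=> sA; rewrite !(subspace_memE _ sA); apply: scalemx_sub. Qed.

Lemma card_subspace A : is_subspace A -> #|A| = (2 ^ sdim A)%N.
Proof. by move=> sA; rewrite {1}sA card_rowspace card_Fp. Qed.

Lemma sdim_subspace_card A k : is_subspace A -> #|A| = (2 ^ k)%N -> sdim A = k.
Proof. by move=> sA; rewrite card_subspace // => /expnI; apply. Qed.

Lemma sdim_leq A : (sdim A <= n)%N.
Proof. exact: rank_leq_col. Qed.

Lemma addr_closed_subspace A :
  0 \in A -> (forall x y, x \in A -> y \in A -> x + y \in A) -> is_subspace A.
Proof.
move=> A0 AD; apply/setP => v; rewrite inE; apply/idP/idP.
  by move=> vA; rewrite (sumsmx_sup v) // genmxE.
case/sub_sumsmxP=> u_ ->; apply: (big_ind (fun w => w \in A)) => // u uA.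
have /sub_rVP [a ->] : (u_ u *m <<u>>%MS <= u)%MS by rewrite -(genmxE u) submxMl.
by case: (F2_cases a) => ->; rewrite ?scale0r ?scale1r.
Qed.

Lemma subspaceT : is_subspace [set: vec n].
Proof. by apply: addr_closed_subspace => *; rewrite in_setT. Qed.

Lemma sdimT : sdim [set: vec n] = n.
Proof. by apply: sdim_subspace_card subspaceT _; rewrite cardsT card_mx card_Fp // mul1n. Qed.

Lemma subspace_nonzero A : is_subspace A -> (0 < sdim A)%N -> exists2 x, x \in A & x != 0.
Proof.
move=> sA dA; have : (1 < #|A|)%N by rewrite card_subspace // -{1}(expn0 2) ltn_exp2l.
case/card_gt1P=> x [y [xA yA]]; have [->|] := eqVneq x 0; last by exists x.
by rewrite eq_sym; exists y.
Qed.

Definition rowset m (M : 'M['F_2]_(m, n)) : {set vec n} := [set v | (v <= M)%MS].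

Lemma rowset_subspace m (M : 'M['F_2]_(m, n)) : is_subspace (rowset M).
Proof.
by apply: addr_closed_subspace => [|x y]; rewrite !inE ?sub0mx //; apply: addmx_sub.
Qed.

Lemma sdim_rowset m (M : 'M['F_2]_(m, n)) : sdim (rowset M) = \rank M.
Proof. by apply: sdim_subspace_card (rowset_subspace M) _; rewrite card_rowspace card_Fp. Qed.

Lemma rowset_stable m (M : 'M['F_2]_(m, n)) (J : 'M['F_2]_n) x :
  (M *m J <= M)%MS -> x \in rowset M -> x *m J \in rowset M.
Proof. by rewrite !inE => MJ xM; apply: submx_trans MJ; apply: submxMr. Qed.

End Subspaces.

Section Partitions.
Variables (n : nat) (P : {set {set vec n}}).
Hypothesis HP : vs_partition P.

Lemma partition_subspace A : A \in P -> is_subspace A.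
Proof. by case/(HP.1 A). Qed.

Lemma partition_count (X : {set vec n}) :
  0 \notin X -> (\sum_(A in P) #|A :&: X|)%N = #|X|.
Proof.
move=> X0; have cardIE A : #|A :&: X| = (\sum_(v in X) (v \in A : nat))%N.
  by rewrite -big_mkcondr /= sum1_card; apply: eq_card => v; rewrite !inE andbC.
under eq_bigr do rewrite cardIE.
rewrite exchange_big /= -sum1_card; apply: eq_bigr => v vX.
have /(HP.2 v) [A0 [[A0P vA0] A0u]] : v != 0 by apply: contraNneq X0 => <-.
rewrite -big_mkcondr /= (big_pred1 A0) // => A; apply/andP/eqP => [[AP vA]|->] //.
exact/esym/A0u.
Qed.

Lemma partition_card : (\sum_(A in P) (2 ^ sdim A - 1))%N = (2 ^ n - 1)%N.
Proof.
have -> : (2 ^ n - 1)%N = #|[set~ (0 : vec n)]| by rewrite cardsC1 card_mx card_Fp // mul1n subn1.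
rewrite -partition_count ?setC11 //; apply: eq_bigr => A AP; have sA := partition_subspace AP.
by rewrite -setDE -card_subspace // (cardsD1 0 A) subspace0 // add1n subn1.
Qed.

Lemma partition_sdimD A B : A \in P -> B \in P -> A != B -> (sdim A + sdim B <= n)%N.
Proof.
move=> AP BP; apply: contraNT; rewrite -ltnNge => ltn_AB.
have sA := partition_subspace AP; have sB := partition_subspace BP.
have : (Defs.span A :&: Defs.span B)%MS != 0.
  rewrite -mxrank_eq0; have := mxrank_sum_cap (Defs.span A) (Defs.span B).
  have := rank_leq_col (Defs.span A + Defs.span B)%MS; rewrite /sdim in ltn_AB; lia.
case/rowV0Pn=> v; rewrite sub_capmx => /andP [vA vB] v0.
rewrite -(subspace_memE _ sA) in vA; rewrite -(subspace_memE _ sB) in vB.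
by have [C [_ Cu]] := HP.2 v v0; rewrite -(Cu A) ?(Cu B).
Qed.

Lemma ndim_le1 d : (n < d + d)%N -> (ndim P d <= 1)%N.
Proof.
move=> lt_n_dd; rewrite leqNgt; apply/card_gt1P => -[A [B []]].
rewrite !inE => /andP [AP /eqP dA] /andP [BP /eqP dB] AB.
by have := partition_sdimD AP BP AB; rewrite dA dB leqNgt lt_n_dd.
Qed.

Lemma ndim_eq0 d e : (n < d + e)%N -> d != e -> (0 < ndim P d)%N -> ndim P e = 0%N.
Proof.
move=> lt_n_de de /card_gt0P [A]; rewrite inE => /andP [AP /eqP dA].
apply/eqP; rewrite cards_eq0; apply/eqP/setP => B; rewrite !inE.
apply/andP => -[BP /eqP dB]; have AB : A != B by apply: contraNneq de => AB; rewrite -dA -dB AB.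
by have := partition_sdimD AP BP AB; rewrite dA dB leqNgt lt_n_de.
Qed.

End Partitions.

Lemma sum_sdim_ndim n (P : {set {set vec n}}) (g : nat -> nat) :
  (\sum_(A in P) g (sdim A))%N = (\sum_(d < n.+1) ndim P d * g d)%N.
Proof.
rewrite (partition_big (fun A => inord (sdim A) : 'I_n.+1) xpredT) //=.
apply: eq_bigr => d _; rewrite (eq_bigr (fun _ => g d)); last first.
  by move=> A /andP [_ /eqP <-]; rewrite inordK // ltnS sdim_leq.
rewrite sum_nat_const; congr (_ * _)%N; apply: eq_card => A.
by rewrite !inE unfold_in -val_eqE /= inordK // ltnS sdim_leq.
Qed.

Lemma ndimE n (P : {set {set vec n}}) d : ndim P d = (\sum_(A in P) (sdim A == d))%N.
Proof. by rewrite -big_mkcondr sum1_card; apply: eq_card => A; rewrite !inE. Qed.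

Lemma ndim_set1 n (W : {set vec n}) d : ndim [set W] d = (sdim W == d).
Proof. by rewrite ndimE big_set1. Qed.

Lemma ndim_setU1 n (W : {set vec n}) (F : {set {set vec n}}) d :
  W \notin F -> ndim (W |: F) d = ((sdim W == d) + ndim F d)%N.
Proof. by move=> WF; rewrite !ndimE big_setU1. Qed.

Lemma ndim_gt0 n (P : {set {set vec n}}) A : A \in P -> (0 < ndim P (sdim A))%N.
Proof. by move=> AP; apply/card_gt0P; exists A; rewrite !inE AP eqxx. Qed.

Lemma ndim_eq0_notin n (P : {set {set vec n}}) (L : seq nat) d :
  (forall A, A \in P -> sdim A \in L) -> d \notin L -> ndim P d = 0%N.
Proof.
move=> PL dL; apply/eqP; rewrite cards_eq0; apply/eqP/setP => A; rewrite !inE.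
by apply/negbTE/andP => -[/PL AL /eqP dA]; move: dL; rewrite -dA AL.
Qed.

Lemma has_type_on n (P : {set {set vec n}}) (L : seq nat) t :
  (forall A, A \in P -> sdim A \in L) -> all (fun p => p.1 \in L) t ->
  {in L, forall d, ndim P d = \sum_(p <- t | p.1 == d) p.2}%N -> has_type P t.
Proof.
move=> PL tL ndimE d; have [/ndimE //|dL] := boolP (d \in L).
rewrite (ndim_eq0_notin PL dL) big1_seq // => p /andP [/eqP pd pt].
by move: (allP tL p pt); rewrite pd (negbTE dL).
Qed.

(** * Planes meeting affine hyperplanes *)

Section Hyperplanes.
Variable n : nat.
Implicit Types (v w x y : vec n) (A G : {set vec n}).

Definition dotv w v : 'F_2 := (v *m w^T) 0 0.

Definition hcoset w : {set vec n} := [set v | dotv w v == 1].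

Lemma dotvDr w x y : dotv w (x + y) = dotv w x + dotv w y.
Proof. by rewrite /dotv mulmxDl mxE. Qed.

Lemma dotvDl x y v : dotv (x + y) v = dotv x v + dotv y v.
Proof. by rewrite /dotv linearD /= mulmxDr mxE. Qed.

Lemma dotv0r w : dotv w 0 = 0.
Proof. by rewrite /dotv mul0mx mxE. Qed.

Lemma dotv_delta j v : dotv (delta_mx 0 j) v = v 0 j.
Proof. by rewrite /dotv trmx_delta -colE mxE. Qed.

Lemma half_or_empty G (f : vec n -> 'F_2) :
  (forall x y, x \in G -> y \in G -> x + y \in G) -> {morph f : x y / x + y} ->
  [set v in G | f v == 1] = set0 \/ (2 * #|[set v in G | f v == 1%R]| = #|G|)%N.
Proof.
move=> GD fD; set G1 := [set v in G | f v == 1].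
have [->|[u uG1]] := set_0Vmem G1; [by left | right].
move: uG1; rewrite /G1 inE => /andP [uG /eqP fu].
rewrite -(cardsID G1 G) mul2n -addnn; congr (_ + _)%N.
  by apply: eq_card => v; rewrite !inE andbA andbb.
have -> : G :\: G1 = [set v + u | v in G1].
  apply/setP => v; rewrite !inE; apply/idP/imsetP => [/andP [fv vG]|[x]].
    exists (v + u); last by rewrite -addrA mxF2_addxx addr0.
    rewrite inE GD // fD fu; move: fv; rewrite vG /=.
    by case: (F2_cases (f v)) => ->; rewrite ?eqxx // add0r.
  by rewrite inE => /andP [xG /eqP fx] ->; rewrite GD // fD fx fu F2_addxx.
by rewrite card_imset //; apply: addIr.
Qed.

Lemma card_dotv_eq1 v : v != 0 -> (2 * #|[set w | dotv w v == 1%R]| = 2 ^ n)%N.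
Proof.
move=> v0; have /existsP [j vj] : [exists j, v 0 j != 0].
  move: v0; apply: contraNT; rewrite negb_exists => /forallP vj.
  by apply/eqP/rowP => j; rewrite mxE; apply/eqP/negPn.
have GD x y : x \in [set: vec n] -> y \in [set: vec n] -> x + y \in [set: vec n].
  by move=> _ _; rewrite in_setT.
have [E|] := half_or_empty GD (fun x y => dotvDl x y v).
  have : delta_mx 0 j \in [set w in [set: vec n] | dotv w v == 1].
    by rewrite !inE dotv_delta -F2_neq0.
  by rewrite E inE.
rewrite cardsT card_mx card_Fp // mul1n => <-; congr (2 * _)%N.
by apply: eq_card => w; rewrite !inE.
Qed.

Lemma card_subspace_hcoset A w :
  is_subspace A -> A :&: hcoset w = set0 \/ (2 * #|A :&: hcoset w| = 2 ^ sdim A)%N.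
Proof.
move=> sA; rewrite -card_subspace //.
have -> : A :&: hcoset w = [set v in A | dotv w v == 1] by apply/setP => v; rewrite !inE.
by apply: half_or_empty (dotvDr w) => x y; apply: subspaceD.
Qed.

Lemma dvdn_card_subspace_hcoset A w k :
  is_subspace A -> (k < sdim A)%N -> (2 ^ k %| #|A :&: hcoset w|)%N.
Proof.
move=> sA lt_k_dA; case: (card_subspace_hcoset w sA) => [->|]; first by rewrite cards0.
rewrite -(subnKC lt_k_dA) expnS => /eqP; rewrite eqn_mul2l /= => /eqP ->.
by rewrite dvdn_exp2l // leq_addr.
Qed.

Lemma card_plane_meet_hcoset A w : is_subspace A -> sdim A = 2%N ->
  #|A :&: hcoset w| = (2 * (A :&: hcoset w != set0))%N.
Proof.
move=> sA dA; case: (card_subspace_hcoset w sA) => [->|]; first by rewrite cards0 eqxx.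
by rewrite dA; case: eqP => [->|]; rewrite ?cards0 //; lia.
Qed.

Lemma card_plane_hcoset A : is_subspace A -> sdim A = 2%N ->
  (4 * #|[set w | A :&: hcoset w != set0]| = 3 * 2 ^ n)%N.
Proof.
move=> sA dA; transitivity (2 * \sum_w #|A :&: hcoset w|)%N.
  rewrite -sum1_card big_mkcond /= !big_distrr; apply: eq_bigr => w _.
  by rewrite (card_plane_meet_hcoset w sA dA) inE; case: ifP.
have cardIE w : #|A :&: hcoset w| = (\sum_(v in A :\ 0%R) (dotv w v == 1%R : nat))%N.
  rewrite -big_mkcondr /= sum1_card; apply: eq_card => v; rewrite !inE [RHS]unfold_in /= !inE.
  by have [->|_] := eqVneq v 0; rewrite ?dotv0r ?andbF.
under eq_bigr do rewrite cardIE.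
rewrite exchange_big big_distrr /= (eq_bigr (fun _ => 2 ^ n)%N); last first.
  move=> v; rewrite !inE => /andP [v0 _].
  rewrite -(card_dotv_eq1 v0) -sum1_card [in RHS]big_mkcond /=.
  by congr (2 * _)%N; apply: eq_bigr => w _; rewrite inE; case: (_ == _).
rewrite sum_nat_const; congr (_ * _)%N.
by have := card_subspace sA; rewrite (cardsD1 0 A) subspace0 // dA add1n => -[].
Qed.

End Hyperplanes.

Section PlanesInPartitions.
Variables (n : nat) (P : {set {set vec n}}).
Hypothesis HP : vs_partition P.
Hypothesis n_ge4 : (4 <= n)%N.
Hypothesis sdimP : forall A, A \in P -> sdim A = 2%N \/ (4 <= sdim A)%N.

Definition planes_meeting (w : vec n) :=
  [set A in P | (sdim A == 2%N) && (A :&: hcoset w != set0)].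

Lemma dvdn_card_planes_meeting w : (4 %| #|planes_meeting w|)%N.
Proof.
have := partition_count HP (X := hcoset w); rewrite inE dotv0r eq_sym oner_eq0 => /(_ isT).
rewrite (bigID (fun A => sdim A == 2%N)) /=.
have -> : (\sum_(A in P | sdim A == 2%N) #|A :&: hcoset w|)%N = (2 * #|planes_meeting w|)%N.
  rewrite -sum1_card big_distrr big_mkcond [in RHS]big_mkcond; apply: eq_bigr => A _.
  rewrite inE; have [AP|_] := boolP (A \in P); last by [].
  have [dA|_] := eqVneq (sdim A) 2%N; last by [].
  by rewrite (card_plane_meet_hcoset w (partition_subspace HP AP) dA); case: (_ != _).
have dvd8_large : (2 ^ 3 %| \sum_(A in P | sdim A != 2%N) #|A :&: hcoset w|)%N.
  apply: dvdn_sum => A /andP [AP dA].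
  apply: dvdn_card_subspace_hcoset (partition_subspace HP AP) _.
  by case: (sdimP AP) => // dA2; rewrite dA2 in dA.
have dvd8_hcoset : (2 ^ 3 %| #|hcoset w|)%N.
  by rewrite -(setTI (hcoset w)) (dvdn_card_subspace_hcoset w (k := 3) (subspaceT n)) // sdimT.
move=> card_hcosetE; move: dvd8_hcoset; rewrite -card_hcosetE dvdn_addl //.
by rewrite (_ : 2 ^ 3 = 2 * 4)%N // dvdn_pmul2l.
Qed.

Lemma sum_card_planes_meeting :
  (4 * \sum_(w : vec n) #|planes_meeting w| = ndim P 2 * (3 * 2 ^ n))%N.
Proof.
have cardE w : #|planes_meeting w| =
    (\sum_(A in P | sdim A == 2%N) (A :&: hcoset w != set0 : nat))%N.
  by rewrite -big_mkcondr /= sum1_card; apply: eq_card => A; rewrite !inE andbA.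
under eq_bigr do rewrite cardE.
rewrite exchange_big big_distrr /= (eq_bigr (fun _ => 3 * 2 ^ n)%N); last first.
  move=> A /andP [AP /eqP dA]; rewrite -(card_plane_hcoset (partition_subspace HP AP) dA).
  by rewrite -sum1_card [in RHS]big_mkcond /=; congr (4 * _)%N; apply: eq_bigr => w _; rewrite inE.
by rewrite sum_nat_const; congr (_ * _)%N; apply: eq_card => A; rewrite !inE.
Qed.

Lemma ndim2_bound : (3 * ndim P 2 <= 16 * (ndim P 2 %/ 4))%N.
Proof.
have le_card w : (#|planes_meeting w| <= 4 * (ndim P 2 %/ 4))%N.
  have le_ndim2 : (#|planes_meeting w| <= ndim P 2)%N.
    by apply/subset_leq_card/subsetP => A; rewrite !inE => /andP [-> /andP [-> _]].
  have /dvdnP [k Ek] := dvdn_card_planes_meeting w.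
  by rewrite Ek mulnC leq_pmul2l // leq_divRL // -Ek.
have : (\sum_(w : vec n) #|planes_meeting w| <= \sum_(w : vec n) 4 * (ndim P 2 %/ 4))%N.
  by apply: leq_sum => w _; apply: le_card.
rewrite sum_nat_const card_mx card_Fp // mul1n -(leq_pmul2l (isT : 0 < 4)%N).
rewrite sum_card_planes_meeting.
set q := (ndim P 2 %/ 4)%N; set N := (2 ^ n)%N; set m := ndim P 2 => le_mN.
have N_gt0 : (0 < N)%N by rewrite expn_gt0.
by rewrite -(leq_pmul2r N_gt0); nia.
Qed.
End PlanesInPartitions.

(** * Partitions of F_2^10 into even-dimensional subspaces *)

Definition even_sdims : seq nat := [:: 2; 4; 6; 8; 10]%N.

Section EvenPartitions.
Variable P : {set {set vec 10}}.
Hypothesis HP : vs_partition P.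
Hypothesis sdim_even : forall A, A \in P -> ~~ odd (sdim A).

Lemma sdim_in_even_sdims A : A \in P -> sdim A \in even_sdims.
Proof.
move=> AP; have := sdim_leq A; have := (HP.1 A AP).2; have := sdim_even AP.
by case: (sdim A) => [|[|[|[|[|[|[|[|[|[|[|[|d]]]]]]]]]]]].
Qed.

Lemma ndim_even_sdims_count :
  (3 * ndim P 2 + 15 * ndim P 4 + 63 * ndim P 6 + 255 * ndim P 8 + 1023 * ndim P 10 = 1023)%N.
Proof.
have := partition_card HP; rewrite (sum_sdim_ndim P (fun d => 2 ^ d - 1)%N).
rewrite -(big_mkord xpredT (fun d => ndim P d * (2 ^ d - 1))%N) /index_iota /= !big_cons big_nil.
have ndim_odd d : d \notin even_sdims -> ndim P d = 0%N := ndim_eq0_notin sdim_in_even_sdims.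
rewrite !(ndim_odd 0%N, ndim_odd 1%N, ndim_odd 3%N, ndim_odd 5%N, ndim_odd 7%N, ndim_odd 9%N) //.
lia.
Qed.

Lemma has_type_even t : all (fun p => p.1 \in even_sdims) t ->
  (ndim P 2 = \sum_(p <- t | p.1 == 2) p.2)%N ->
  (ndim P 4 = \sum_(p <- t | p.1 == 4) p.2)%N ->
  (ndim P 6 = \sum_(p <- t | p.1 == 6) p.2)%N ->
  (ndim P 8 = \sum_(p <- t | p.1 == 8) p.2)%N ->
  (ndim P 10 = \sum_(p <- t | p.1 == 10) p.2)%N ->
  has_type P t.
Proof.
move=> tL n2 n4 n6 n8 n10; apply: has_type_on sdim_in_even_sdims tL _ => d.
by rewrite !inE; case/or4P; [| | | case/orP] => /eqP ->.
Qed.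

Lemma even_partition_type :
  [\/ has_type P [:: (10, 1)],
      has_type P [:: (2, 256); (8, 1)],
      exists2 i, (i <= 64)%N & has_type P [:: (2, 320 - 5 * i); (4, i); (6, 1)]
    | exists2 i, (i <= 66)%N & has_type P [:: (2, 341 - 5 * i); (4, i)]]%N.
Proof.
have count := ndim_even_sdims_count.
have le1_8 : (ndim P 8 <= 1)%N by apply: ndim_le1.
have le1_6 : (ndim P 6 <= 1)%N by apply: ndim_le1.
have no4_8 : (0 < ndim P 8)%N -> ndim P 4 = 0%N by apply: ndim_eq0.
have no6_8 : (0 < ndim P 8)%N -> ndim P 6 = 0%N by apply: ndim_eq0.
have planes : ndim P 6 = 0%N -> ndim P 8 = 0%N -> ndim P 10 = 0%N ->
    (3 * ndim P 2 <= 16 * (ndim P 2 %/ 4))%N.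
  move=> no6 no8 no10; apply: ndim2_bound => // A AP.
  move: (sdim_in_even_sdims AP) (ndim_gt0 AP); rewrite !inE.
  by case/or4P; [| | | case/orP] => /eqP ->; rewrite ?no6 ?no8 ?no10 //; [left | right].
have [no10|some10] := posnP (ndim P 10); last first.
  by apply: Or41; apply: has_type_even; rewrite //= !big_cons big_nil /=; lia.
have [no8|some8] := posnP (ndim P 8); last first.
  by apply: Or42; apply: has_type_even; rewrite //= !big_cons big_nil /=; lia.
have [no6|some6] := posnP (ndim P 6); last first.
  apply: Or43; exists (ndim P 4); first lia.
  by apply: has_type_even; rewrite //= !big_cons big_nil /=; lia.
apply: Or44; exists (ndim P 4); first by have := planes no6 no8 no10; lia.
by apply: has_type_even; rewrite //= !big_cons big_nil /=; lia.
Qed.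
End EvenPartitions.

(** * Completing F_4-subspaces by F_4-lines *)

Definition trivIspace n (F : {set {set vec n}}) :=
  forall W W' x, W \in F -> W' \in F -> W != W' -> x \in W -> x \in W' -> x = 0.

Lemma trivIspace1 n (W : {set vec n}) : trivIspace [set W].
Proof. by move=> A B x; rewrite !inE => /eqP -> /eqP ->; rewrite eqxx. Qed.

Lemma trivIspaceU1 n (W : {set vec n}) (F : {set {set vec n}}) :
  (forall W' x, W' \in F -> x \in W -> x \in W' -> x = 0) -> trivIspace F ->
  trivIspace (W |: F).
Proof.
move=> WF trivF A B x; rewrite !inE => /predU1P [->|AF] /predU1P [->|BF]; rewrite ?eqxx //.
- by move=> _; apply: WF.
- by move=> _ xA xW; apply: WF xW xA.
- exact: trivF.
Qed.

Section LineCompletion.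
Variables (n : nat) (J : 'M['F_2]_n).
Hypothesis J2 : J *m J = J + 1%:M.
Implicit Types (v u x y : vec n) (a b : 'F_2).

Lemma mulmxJJ (v : vec n) : v *m J *m J = v *m J + v.
Proof. by rewrite -mulmxA J2 mulmxDr mulmx1. Qed.

Definition line v : {set vec n} :=
  [set a *: v + b *: (v *m J) | a in [set: 'F_2], b in [set: 'F_2]].

Lemma line_indep v a b : v != 0 -> a *: v + b *: (v *m J) = 0 -> a = 0 /\ b = 0.
Proof.
move=> v0; have vJ0 : v *m J != 0.
  by apply: contraNneq v0 => vJ0; have := mulmxJJ v; rewrite vJ0 mul0mx add0r => <-.
have vJv : v *m J != v.
  by apply: contraNneq v0 => vJv; have := mulmxJJ v; rewrite vJv vJv mxF2_addxx => <-.
case: (F2_cases a) => ->; case: (F2_cases b) => ->; rewrite ?scale0r ?scale1r ?addr0 ?add0r //.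
- by move=> vJ_0; rewrite vJ_0 eqxx in vJ0.
- by move=> v_0; rewrite v_0 eqxx in v0.
- by move=> vvJ; move: vJv; rewrite -[v *m J](mxF2_addKx v) vvJ addr0 eqxx.
Qed.

Lemma line_addr_closed v x y : x \in line v -> y \in line v -> x + y \in line v.
Proof.
case/imset2P=> a b _ _ -> /imset2P [a' b' _ _ ->].
by rewrite addrACA -!scalerDl; apply: imset2_f; rewrite inE.
Qed.

Lemma line_subspace v : is_subspace (line v).
Proof.
apply: addr_closed_subspace; last exact: line_addr_closed.
by apply/imset2P; exists 0 0; rewrite ?inE // !scale0r addr0.
Qed.

Lemma mem_line v : v \in line v.
Proof. by apply/imset2P; exists 1 0; rewrite ?inE // scale1r scale0r addr0. Qed.

Lemma line_stable v x : x \in line v -> x *m J \in line v.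
Proof.
case/imset2P=> a b _ _ ->; apply/imset2P; exists b (a + b); rewrite ?inE //.
by rewrite mulmxDl -!scalemxAl mulmxJJ scalerDr scalerDl addrA addrC.
Qed.

Lemma card_line v : v != 0 -> #|line v| = 4%N.
Proof.
move=> v0; rewrite /line curry_imset2X card_imset ?cardsX ?cardsT ?card_Fp //.
move=> [a b] [a' b'] /= /eqP; rewrite -subr_eq0 opprD addrACA -!scalerBl => /eqP.
by case/(line_indep v0) => /eqP; rewrite subr_eq0 => /eqP-> /eqP; rewrite subr_eq0 => /eqP->.
Qed.

Lemma sdim_line v : v != 0 -> sdim (line v) = 2%N.
Proof. by move=> v0; apply: sdim_subspace_card (line_subspace v) _; rewrite card_line. Qed.

Lemma line_sub (W : {set vec n}) v : is_subspace W ->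
  (forall x, x \in W -> x *m J \in W) -> v \in W -> line v \subset W.
Proof.
move=> sW WJ vW; apply/subsetP => x /imset2P [a b _ _ ->].
by apply: subspaceD => //; apply: subspaceZ => //; apply: WJ.
Qed.

Lemma line_eq v u : u != 0 -> u \in line v -> line u = line v.
Proof.
move=> u0 uv; have v0 : v != 0.
  apply: contraNneq u0 => v0; move: uv; rewrite v0 => /imset2P [a b _ _ ->].
  by rewrite mul0mx !scaler0 addr0.
apply/eqP; rewrite eqEcard !card_line // leqnn andbT.
by apply: line_sub uv; [apply: line_subspace | apply: line_stable].
Qed.

Variable Wf : {set {set vec n}}.
Hypothesis Wf_subspace : forall W, W \in Wf -> is_subspace W /\ (0 < sdim W)%N.
Hypothesis Wf_stable : forall W, W \in Wf -> forall x, x \in W -> x *m J \in W.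
Hypothesis Wf_trivI : trivIspace Wf.

Definition uncovered : {set vec n} := [set v | (v != 0) && (v \notin \bigcup_(W in Wf) W)].

Definition line_completion : {set {set vec n}} := Wf :|: [set line v | v in uncovered].

Lemma line_completion_partition : vs_partition line_completion.
Proof.
split=> [A|v v0].
  rewrite inE => /orP [/Wf_subspace //|/imsetP [v]].
  by rewrite inE => /andP [v0 _] ->; rewrite sdim_line //; split; first exact: line_subspace.
have [/bigcupP [W WWf vW]|vunc] := boolP (v \in \bigcup_(W in Wf) W).
  exists W; split=> [|B []]; first by rewrite inE WWf.
  rewrite inE => /orP [BWf vB|/imsetP [u]].
    apply/eqP/negPn/negP => WB; move/eqP: v0; apply.
    exact: Wf_trivI WWf BWf WB vW vB.
  rewrite inE => /andP [_ /bigcupP uunc] -> vu; case: uunc; exists W => //.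
  have Wsub := line_sub (Wf_subspace WWf).1 (Wf_stable WWf) vW.
  by apply: (subsetP Wsub); rewrite (line_eq v0 vu) mem_line.
exists (line v); split=> [|B []].
  split; last exact: mem_line.
  by rewrite inE; apply/orP; right; apply: imset_f; rewrite inE v0.
rewrite inE => /orP [BWf vB|/imsetP [u]].
  by case/bigcupP: vunc; exists B.
by rewrite inE => /andP [u0 _] -> vu; rewrite (line_eq v0 vu).
Qed.

Lemma ndim_line_completion d : d != 2%N -> ndim line_completion d = ndim Wf d.
Proof.
move=> d2; apply: eq_card => A; rewrite !inE andb_orl.
suff -> : (A \in [set line v | v in uncovered]) && (sdim A == d) = false by rewrite orbF.
apply/negbTE/andP => -[/imsetP [v]]; rewrite inE => /andP [v0 _] -> /eqP.
by rewrite sdim_line // => d2E; rewrite -d2E in d2.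
Qed.

Lemma line_completion_sdim A : A \in line_completion -> A \in Wf \/ sdim A = 2%N.
Proof.
rewrite inE => /orP [|/imsetP [v]]; first by left.
by rewrite inE => /andP [v0 _] ->; right; apply: sdim_line.
Qed.

End LineCompletion.

(** * Computing with matrices over F_2 *)

Definition bmx m n (f : nat -> nat -> bool) : 'M['F_2]_(m, n) := \matrix_(i, j) (f i j)%:R.

Definition bmul k (f g : nat -> nat -> bool) i j :=
  odd (count (fun l => f i l && g l j) (iota 0 k)).

Definition badd (f g : nat -> nat -> bool) i j := f i j (+) g i j.

Definition beq m n (f g : nat -> nat -> bool) :=
  all (fun i => all (fun j => f i j == g i j) (iota 0 n)) (iota 0 m).

Lemma F2_sum_bool k (b : nat -> bool) :
  \sum_(l < k) (b l)%:R = (odd (count b (iota 0 k)))%:R :> 'F_2.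
Proof.
rewrite -(big_mkord xpredT (fun l => (b l)%:R)) -F2_natE -sum1_count natr_sum.
by rewrite [in RHS]big_mkcond /index_iota subn0; apply: eq_bigr => l _; case: (b l).
Qed.

Lemma F2_bool_inj (a b : bool) : (a%:R : 'F_2) = b%:R -> a = b.
Proof. by case: a; case: b. Qed.

Lemma bmx_mul m k n f g : bmx m k f *m bmx k n g = bmx m n (bmul k f g).
Proof.
apply/matrixP => i j; rewrite !mxE -F2_sum_bool; apply: eq_bigr => l _.
by rewrite !mxE; case: (f i l); case: (g l j); rewrite ?mulr0 ?mulr1.
Qed.

Lemma bmx_add m n f g : bmx m n f + bmx m n g = bmx m n (badd f g).
Proof.
apply/matrixP => i j; rewrite !mxE /badd.
by case: (f i j); case: (g i j); rewrite ?addr0 ?add0r ?F2_addxx.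
Qed.

Lemma bmx1 n : 1%:M = bmx n n (fun i j => i == j).
Proof. by apply/matrixP => i j; rewrite !mxE. Qed.

Lemma bmx0 m n : 0 = bmx m n (fun _ _ => false).
Proof. by apply/matrixP => i j; rewrite !mxE. Qed.

Lemma mem_iota0 i k : (i \in iota 0 k) = (i < k)%N.
Proof. by rewrite mem_iota. Qed.

Lemma bmxP m n f g : reflect (bmx m n f = bmx m n g) (beq m n f g).
Proof.
apply: (iffP allP) => [fg|fg i].
  apply/matrixP => i j; rewrite !mxE; congr (_%:R).
  have /allP fgi : all (fun j => f i j == g i j) (iota 0 n) by apply: fg; rewrite mem_iota0.
  by rewrite (eqP (fgi j _)) // mem_iota0.
rewrite mem_iota0 => ltim; apply/allP => j; rewrite mem_iota0 => ltjn; apply/eqP/F2_bool_inj.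
by have := congr1 (fun M : 'M['F_2]_(m, n) => M (Ordinal ltim) (Ordinal ltjn)) fg; rewrite !mxE.
Qed.

Ltac bmx_compute :=
  rewrite ?bmx1 ?bmx_mul ?bmx_add ?bmx_mul; apply/bmxP; vm_compute; reflexivity.

Fixpoint bitseqs k : seq (seq bool) :=
  if k is k'.+1 then [seq b :: s | b <- [:: false; true], s <- bitseqs k'] else [:: [::]].

Lemma mem_bitseqs s : s \in bitseqs (size s).
Proof.
elim: s => [|b s IHs] //=; rewrite !mem_cat.
by case: b; rewrite ?(map_f (cons true) IHs) ?(map_f (cons false) IHs) ?orbT.
Qed.

Definition bits n (v : 'rV['F_2]_n) : seq bool := [seq v 0 j == 1 | j <- enum 'I_n].

Definition rowb (s : seq bool) : nat -> nat -> bool := fun _ j => nth false s j.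

Lemma bitsE n (v : 'rV['F_2]_n) j : v 0 j = (nth false (bits v) j)%:R.
Proof. by rewrite (nth_map j) ?size_enum_ord // nth_ord_enum; case: (F2_cases (v 0 j)) => ->. Qed.

Lemma bitsK n (v : 'rV['F_2]_n) : v = bmx 1 n (rowb (bits v)).
Proof. by apply/rowP => j; rewrite !mxE -bitsE. Qed.

Lemma size_bits n (v : 'rV['F_2]_n) : size (bits v) = n.
Proof. by rewrite size_map size_enum_ord. Qed.

Lemma bits_mem_bitseqs n (v : 'rV['F_2]_n) : bits v \in bitseqs n.
Proof. by rewrite -{2}(size_bits v) mem_bitseqs. Qed.

(** * Explicit partitions of F_2^10 *)

(** [Jmx k] maps each coordinate pair [(x, y)] of a row vector to [(y, x + y)],
    i.e. multiplies it by a primitive element of [F_4]. *)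
Definition Jb (i j : nat) : bool := if odd i then (j == i.-1) || (j == i) else j == i.+1.

Definition Jmx k : 'M['F_2]_k := bmx k k Jb.

Lemma Jmx10_sqr : Jmx 10 *m Jmx 10 = Jmx 10 + 1%:M.
Proof. rewrite /Jmx; bmx_compute. Qed.

Lemma pid_bmx m n r : (pid_mx r : 'M['F_2]_(m, n)) = bmx m n (fun i j => (i == j) && (i < r)%N).
Proof. by apply/matrixP => i j; rewrite !mxE. Qed.

Definition coord_space k : {set vec 10} := rowset (pid_mx k : 'M['F_2]_(k, 10)).

Lemma coord_space_stable k x : k \in [:: 4; 6; 8; 10]%N ->
  x \in coord_space k -> x *m Jmx 10 \in coord_space k.
Proof.
move=> kE; apply: rowset_stable; apply/submxP; exists (Jmx k).
by move: kE; rewrite !inE => /or4P [] /eqP ->; rewrite /Jmx !pid_bmx; bmx_compute.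
Qed.

Lemma sdim_coord_space k : (k <= 10)%N -> sdim (coord_space k) = k.
Proof. by move=> le_k10; rewrite sdim_rowset rank_pid_mx. Qed.

(** On the first six coordinates, viewed as [F_4^3], the [F_2]-span of the
    [gen_mx k] is the space of the [F_4]-linear maps
    [(X0, X1) |-> (X0, X1) * [[a, b, c], [c, a, b + c]]] with [a, b, c] in
    [F_4]. *)
Definition gen_base (l i j : nat) : bool :=
  match l with
  | 0 => j == i
  | 1 => j == i + 2
  | _ => if (i < 2)%N then j == i + 4 else (j == i - 2) || (j == i + 2)
  end%N.

Definition gen_bool (k : nat) : nat -> nat -> bool :=
  if odd k then bmul 4 Jb (gen_base k./2) else gen_base k./2.

Definition gen_mx (k : nat) : 'M['F_2]_(4, 10) := bmx 4 10 (gen_bool k).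

Definition comb_mx (c : 'rV['F_2]_6) : 'M['F_2]_(4, 10) := \sum_(k < 6) c 0 k *: gen_mx k.

Definition tail_mx : 'M['F_2]_(4, 10) := bmx 4 10 (fun i j => j == i + 6)%N.

Definition tail_proj : 'M['F_2]_(10, 4) := bmx 10 4 (fun i j => i == j + 6)%N.

Definition graph_mx c := comb_mx c + tail_mx.

Definition graph_space c : {set vec 10} := rowset (graph_mx c).

Lemma comb_mxB c c' : comb_mx c - comb_mx c' = comb_mx (c - c').
Proof. by rewrite /comb_mx -sumrB; apply: eq_bigr => k _; rewrite !mxE scalerBl. Qed.

Lemma comb_mx_tail_proj c : comb_mx c *m tail_proj = 0.
Proof.
rewrite mulmx_suml big1 // => k _; rewrite -scalemxAl (_ : gen_mx k *m tail_proj = 0) ?scaler0 //.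
by rewrite /gen_mx /tail_proj (bmx0 4 4); case: k => -[|[|[|[|[|[|m]]]]]] Hm //; bmx_compute.
Qed.

Lemma comb_mx_stable c : comb_mx c *m Jmx 10 = Jmx 4 *m comb_mx c.
Proof.
rewrite mulmx_suml mulmx_sumr; apply: eq_bigr => k _; rewrite -scalemxAl -scalemxAr.
by congr (_ *: _); rewrite /gen_mx /Jmx; case: k => -[|[|[|[|[|[|m]]]]]] Hm //; bmx_compute.
Qed.

Lemma graph_mx_tail_proj c : graph_mx c *m tail_proj = 1%:M.
Proof. by rewrite mulmxDl comb_mx_tail_proj add0r /tail_proj /tail_mx; bmx_compute. Qed.

Definition comb_bool (s : seq bool) (i j : nat) : bool :=
  odd (count (fun k => nth false s k && gen_bool k i j) (iota 0 6)).

Lemma comb_mx_bmx c : comb_mx c = bmx 4 10 (comb_bool (bits c)).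
Proof.
apply/matrixP => i j; rewrite summxE !mxE -F2_sum_bool; apply: eq_bigr => k _.
by rewrite !mxE bitsE; case: (nth _ _ _); case: (gen_bool _ _ _); rewrite ?mulr0 ?mulr1.
Qed.

Definition comb_full_rank_check : bool :=
  all (fun sc => all (fun sx =>
      beq 1 10 (bmul 4 (rowb sx) (comb_bool sc)) (fun _ _ => false) ==>
      beq 1 6 (rowb sc) (fun _ _ => false) || beq 1 4 (rowb sx) (fun _ _ => false))
    (bitseqs 4)) (bitseqs 6).

Lemma comb_full_rank_check_ok : comb_full_rank_check.
Proof. by vm_compute. Qed.

Lemma comb_mx_full_rank c (x : 'rV['F_2]_4) : x *m comb_mx c = 0 -> c = 0 \/ x = 0.
Proof.
move=> xc0; have : beq 1 10 (bmul 4 (rowb (bits x)) (comb_bool (bits c))) (fun _ _ => false).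
  by apply/bmxP; rewrite -bmx_mul -bitsK -comb_mx_bmx -bmx0.
move/(implyP (allP (allP comb_full_rank_check_ok _ (bits_mem_bitseqs c)) _ (bits_mem_bitseqs x))).
by case/orP => /bmxP; rewrite -bitsK -bmx0; [left | right].
Qed.

Lemma sdim_graph_space c : sdim (graph_space c) = 4%N.
Proof.
by rewrite sdim_rowset; apply/eqP/row_freeP; exists tail_proj; apply: graph_mx_tail_proj.
Qed.

Lemma graph_space_stable c x : x \in graph_space c -> x *m Jmx 10 \in graph_space c.
Proof.
apply: rowset_stable; apply/submxP; exists (Jmx 4).
rewrite mulmxDl mulmxDr comb_mx_stable; congr (_ + _).
by rewrite /tail_mx /Jmx; bmx_compute.
Qed.

Lemma graph_space_disjoint c c' v :
  c != c' -> v \in graph_space c -> v \in graph_space c' -> v = 0.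
Proof.
rewrite !inE => cc' /submxP [x ->] /submxP [y xy].
have yx : y = x.
  by have := congr1 (mulmx^~ tail_proj) xy; rewrite /= -!mulmxA !graph_mx_tail_proj !mulmx1.
have : x *m comb_mx (c - c') = 0.
  move: xy; rewrite yx /graph_mx !mulmxDr => /addIr.
  by rewrite -comb_mxB mulmxBr => ->; rewrite subrr.
case/comb_mx_full_rank => [/eqP|->]; last by rewrite mul0mx.
by rewrite subr_eq0 (negbTE cc').
Qed.

Lemma coord_graph_disjoint k c v : k \in [:: 4; 6]%N ->
  v \in coord_space k -> v \in graph_space c -> v = 0.
Proof.
move=> kE; rewrite !inE => /submxP [x ->] /submxP [y xy].
have pid_proj : (pid_mx k : 'M_(k, 10)) *m tail_proj = 0.
  by move: kE; rewrite !inE => /orP [] /eqP ->; rewrite pid_bmx /tail_proj bmx0; bmx_compute.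
have := congr1 (mulmx^~ tail_proj) xy; rewrite /= -!mulmxA graph_mx_tail_proj pid_proj.
by rewrite mulmx0 mulmx1 => y0; rewrite xy -y0 mul0mx.
Qed.

Lemma exists_set_of_card (T : finType) k : (k <= #|T|)%N -> exists A : {set T}, #|A| = k.
Proof.
move=> le_kT; have : (0 < #|[set A : {set T} | #|A| == k]|)%N by rewrite card_draws bin_gt0.
by case/card_gt0P => A; rewrite inE => /eqP; exists A.
Qed.

Definition graph_family (S : {set 'rV['F_2]_6}) : {set {set vec 10}} :=
  [set graph_space c | c in S].

Lemma graph_space_inj : injective graph_space.
Proof.
move=> c c' Ecc'; apply/eqP; apply: contraT => cc'.
have c_pos : (0 < sdim (graph_space c))%N by rewrite sdim_graph_space.
have [x xc x0] := subspace_nonzero (rowset_subspace (graph_mx c)) c_pos.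
by move: x0; rewrite (graph_space_disjoint cc' xc) ?eqxx // -Ecc'.
Qed.

Lemma ndim_graph_family S d : ndim (graph_family S) d = ((d == 4) * #|S|)%N.
Proof.
rewrite ndimE big_imset; last by move=> c c' _ _; apply: graph_space_inj.
rewrite (eq_bigr (fun _ => (d == 4 : nat))) => [|c _]; last by rewrite sdim_graph_space eq_sym.
by rewrite sum_nat_const mulnC.
Qed.

Lemma graph_family_trivI S : trivIspace (graph_family S).
Proof.
move=> A B x /imsetP [c _ ->] /imsetP [c' _ ->] cc'; apply: graph_space_disjoint.
by apply: contraNneq cc' => ->.
Qed.

Definition big_F4_subspace (W : {set vec 10}) := [/\ is_subspace W,
  sdim W \in [:: 4; 6; 8; 10]%N & forall x, x \in W -> x *m Jmx 10 \in W].

Lemma coord_big_F4_subspace k : k \in [:: 4; 6; 8; 10]%N -> big_F4_subspace (coord_space k).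
Proof.
move=> kE; split; [exact: rowset_subspace | | by move=> x; apply: coord_space_stable].
by move: (kE); rewrite !inE => /or4P [] /eqP ->; rewrite sdim_coord_space.
Qed.

Lemma graph_big_F4_subspace c : big_F4_subspace (graph_space c).
Proof.
split; [exact: rowset_subspace | by rewrite sdim_graph_space | move=> x].
exact: graph_space_stable.
Qed.

Section TypesOfCompletions.
Variable F : {set {set vec 10}}.
Hypothesis F_big : forall W, W \in F -> big_F4_subspace W.
Hypothesis F_trivI : trivIspace F.

Lemma completion_has_type t : all (fun p => p.1 \in even_sdims) t ->
  (3 * \sum_(p <- t | p.1 == 2) p.2 + 15 * ndim F 4 + 63 * ndim F 6 + 255 * ndim F 8
     + 1023 * ndim F 10 = 1023)%N ->
  (ndim F 4 = \sum_(p <- t | p.1 == 4) p.2)%N ->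
  (ndim F 6 = \sum_(p <- t | p.1 == 6) p.2)%N ->
  (ndim F 8 = \sum_(p <- t | p.1 == 8) p.2)%N ->
  (ndim F 10 = \sum_(p <- t | p.1 == 10) p.2)%N ->
  exists P : {set {set vec 10}}, vs_partition P /\ has_type P t.
Proof.
move=> tL count n4 n6 n8 n10; set P := line_completion (Jmx 10) F.
have F_pos W : W \in F -> is_subspace W /\ (0 < sdim W)%N.
  by case/F_big => sW + _; rewrite !inE => /or4P [] /eqP ->.
have F_stable W : W \in F -> forall x, x \in W -> x *m Jmx 10 \in W by case/F_big.
have HP : vs_partition P := line_completion_partition Jmx10_sqr F_pos F_stable F_trivI.
have P_even A : A \in P -> ~~ odd (sdim A).
  case/(line_completion_sdim Jmx10_sqr) => [/F_big [_ + _]|->] //.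
  by rewrite !inE => /or4P [] /eqP ->.
have ndimP d : d != 2%N -> ndim P d = ndim F d by apply: ndim_line_completion Jmx10_sqr F d.
exists P; split=> //; have := ndim_even_sdims_count HP P_even.
rewrite (ndimP 4%N) // (ndimP 6%N) // (ndimP 8%N) // (ndimP 10%N) // => countP.
by apply: has_type_even; rewrite // ?(ndimP 4%N, ndimP 6%N, ndimP 8%N, ndimP 10%N) //; lia.
Qed.

End TypesOfCompletions.

Lemma coord_not_graph k S : k \in [:: 4; 6]%N -> coord_space k \notin graph_family S.
Proof.
move=> kE; apply/imsetP => -[c _ Ekc].
have kpos : (0 < sdim (coord_space k))%N.
  by move: kE; rewrite !inE => /orP [] /eqP ->; rewrite sdim_coord_space.
have [x xk x0] := subspace_nonzero (rowset_subspace _) kpos.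
by move: x0; rewrite (coord_graph_disjoint (c := c) kE xk) ?eqxx // -Ekc.
Qed.

Lemma coord_graph_trivI k S : k \in [:: 4; 6]%N -> trivIspace (coord_space k |: graph_family S).
Proof.
move=> kE; apply: trivIspaceU1 => [W x /imsetP [c _ ->] xk|]; last exact: graph_family_trivI.
exact: coord_graph_disjoint kE xk.
Qed.

Lemma partition_type_10 :
  exists P : {set {set vec 10}}, vs_partition P /\ has_type P [:: (10, 1)]%N.
Proof.
apply: (@completion_has_type [set coord_space 10]).
- by move=> W /set1P ->; apply: coord_big_F4_subspace.
- exact: trivIspace1.
all: by rewrite ?ndim_set1 ?sdim_coord_space // !big_cons big_nil.
Qed.

Lemma partition_type_8 :
  exists P : {set {set vec 10}}, vs_partition P /\ has_type P [:: (2, 256); (8, 1)]%N.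
Proof.
apply: (@completion_has_type [set coord_space 8]).
- by move=> W /set1P ->; apply: coord_big_F4_subspace.
- exact: trivIspace1.
all: by rewrite ?ndim_set1 ?sdim_coord_space // !big_cons big_nil.
Qed.

Lemma partition_type_6 i : (i <= 64)%N -> exists P : {set {set vec 10}},
  vs_partition P /\ has_type P [:: (2, 320 - 5 * i); (4, i); (6, 1)]%N.
Proof.
move=> le_i64; have [S cardS] : exists S : {set 'rV['F_2]_6}, #|S| = i.
  by apply: exists_set_of_card; rewrite card_mx card_Fp.
apply: (@completion_has_type (coord_space 6 |: graph_family S)).
- move=> W /setU1P [->|/imsetP [c _ ->]]; last exact: graph_big_F4_subspace.
  exact: coord_big_F4_subspace.
- exact: coord_graph_trivI.
all: rewrite ?ndim_setU1 ?coord_not_graph // ?ndim_graph_family cardS ?sdim_coord_space //.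
all: by rewrite !big_cons big_nil /=; lia.
Qed.

Lemma partition_type_4 i : (i <= 65)%N -> exists P : {set {set vec 10}},
  vs_partition P /\ has_type P [:: (2, 341 - 5 * i); (4, i)]%N.
Proof.
rewrite leq_eqVlt ltnS => /predU1P [->|le_i64].
{ apply: (@completion_has_type (coord_space 4 |: graph_family setT)).
  - move=> W /setU1P [->|/imsetP [c _ ->]]; last exact: graph_big_F4_subspace.
    exact: coord_big_F4_subspace.
  - exact: coord_graph_trivI.
  all: rewrite ?ndim_setU1 ?coord_not_graph // ?ndim_graph_family ?sdim_coord_space //.
  all: by rewrite cardsT card_mx card_Fp // !big_cons big_nil. }
have [S cardS] : exists S : {set 'rV['F_2]_6}, #|S| = i.
  by apply: exists_set_of_card; rewrite card_mx card_Fp.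
apply: (@completion_has_type (graph_family S)).
- by move=> W /imsetP [c _ ->]; apply: graph_big_F4_subspace.
- exact: graph_family_trivI.
all: rewrite ?ndim_graph_family ?cardS //.
all: by rewrite !big_cons big_nil /=; lia.
Qed.

Local Close Scope ring_scope.

Theorem mainTheorem11 :
  (forall P : {set {set vec 10}},
     vs_partition P ->
     (forall A, A \in P -> ~~ odd (sdim A)) ->
     [\/ has_type P [:: (10, 1)],
         has_type P [:: (2, 256); (8, 1)],
         exists2 i, (i <= 64)%N & has_type P [:: (2, 320 - 5 * i); (4, i); (6, 1)]
       | exists2 i, (i <= 66)%N & has_type P [:: (2, 341 - 5 * i); (4, i)]]%N)
  /\
  [/\ exists P : {set {set vec 10}}, vs_partition P /\ has_type P [:: (10, 1)],
      exists P : {set {set vec 10}}, vs_partition P /\ has_type P [:: (2, 256); (8, 1)],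
      (forall i, (i <= 64)%N ->
         exists P : {set {set vec 10}},
           vs_partition P /\ has_type P [:: (2, 320 - 5 * i); (4, i); (6, 1)])
    & (forall i, (i <= 65)%N ->
         exists P : {set {set vec 10}},
           vs_partition P /\ has_type P [:: (2, 341 - 5 * i); (4, i)])]%N.
Proof.
split; first exact: even_partition_type.
split; [exact: partition_type_10 | exact: partition_type_8 | exact: partition_type_6 |].
exact: partition_type_4.
Qed.
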